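(* Let $p$ be an odd prime and let $L$ be a $\mathbb{Z}_p$-lattice of rank $k\ge4$ with $L\simeq\langle\epsilon_1,p^{e_2}\epsilon_2,p^{e_3}\epsilon_3,\dots,p^{e_k}\epsilon_k\rangle$, where $0\le e_2\le\cdots\le e_k$ and $\epsilon_i\in\mathbb{Z}_p^\times$. If $\nu_p(\langle\epsilon_1,p^{e_2}\epsilon_2,p^{e_3}\epsilon_3\rangle)=\infty$ (i.e., this ternary lattice is anisotropic), then $B(\mathbf x,\mathbf y)\in p^{\nu_p(L)-1}\mathbb{Z}_p$ for all $\mathbf x,\mathbf y\in L$ with $\mathrm{ord}_p(Q(\mathbf x))=\mathrm{ord}_p(Q(\mathbf y))=\nu_p(L)$.
   Context: $\langle a_1,\dots,a_k\rangle$ denotes the $\mathbb{Z}_p$-lattice with diagonal Gram matrix; $B$ is the bilinear form and $Q(\mathbf x)=B(\mathbf x,\mathbf x)$. For odd $p$, $SC_p=\{1,\Delta_p,p,p\Delta_p\}$ with $\Delta_p$ a non-square unit. For $L$ of rank $\ge4$ and $s\in SC_p$, let $u\ge0$ be least with $sp^{2u}=Q(\mathbf x)$ for some $\mathbf x\in L$; $\nu_{p,s}(L)=\mathrm{ord}_p(sp^{2u})$ and $\nu_p(L)=\max_{s\in SC_p}\nu_{p,s}(L)$. For an anisotropic ternary lattice $K$, $\nu_p(K)=\infty$. *)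

(* The ring Z_p of p-adic integers is modelled concretely as
   the inverse limit of Z/p^n Z: a p-adic integer is a coherent sequence
   f : nat -> int with f (n+1) = f n (mod p^n); f n represents x mod p^n. *)
From HB Require Import structures.
From mathcomp Require Import all_boot all_order all_algebra.
From Stdlib Require Import ClassicalEpsilon.
Set Implicit Arguments. Unset Strict Implicit. Unset Printing Implicit Defensive.
Import Order.TTheory GRing.Theory Num.Theory.
Local Open Scope ring_scope.

Definition zps := nat -> int.

Definition ppow (p n : nat) : int := Posz (expn p n).

Definition zcoh (p : nat) (f : zps) : Prop :=
  forall n : nat, (f n.+1 = f n %[mod ppow p n])%Z.

Definition zeq (p : nat) (f g : zps) : Prop :=
  forall n : nat, (f n = g n %[mod ppow p n])%Z.

Definition zcst (c : int) : zps := fun _ => c.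
Definition zadd (f g : zps) : zps := fun n => f n + g n.
Definition zmul (f g : zps) : zps := fun n => f n * g n.

(* x \in p^m Z_p *)
Definition zin_pow (p : nat) (f : zps) (m : nat) : Prop :=
  (f m = 0 %[mod ppow p m])%Z.

Definition zord_eq (p : nat) (f : zps) (m : nat) : Prop :=
  zin_pow p f m /\ ~ zin_pow p f m.+1.

Definition zunit (p : nat) (f : zps) : Prop := ~ zin_pow p f 1.

Definition zsquare (p : nat) (f : zps) : Prop :=
  exists t : zps, zcoh p t /\ zeq p f (zmul t t).

Definition zvec (p m : nat) (x : nat -> zps) : Prop :=
  forall i : nat, (i < m)%N -> zcoh p (x i).

Definition Bdiag (m : nat) (a : nat -> zps) (x y : nat -> zps) : zps :=
  fun n => \sum_(i < m) a i n * x i n * y i n.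
Definition Qdiag (m : nat) (a : nat -> zps) (x : nat -> zps) : zps :=
  Bdiag m a x x.

Definition represents (p m : nat) (a : nat -> zps) (c : zps) : Prop :=
  exists x, zvec p m x /\ zeq p (Qdiag m a x) c.

(* s = d * p^t with d in {1, Delta}, t in {0,1}; u = least u with
   s p^(2u) represented; nu_{p,s} = ord_p(s p^(2u)) = t + 2u. *)
Definition least_rep_u (p m : nat) (a : nat -> zps) (d : zps) (t : nat) : nat :=
  epsilon (inhabits 0%N)
    (fun u => represents p m a (zmul d (zcst (ppow p (t + 2 * u))))
      /\ forall v, represents p m a (zmul d (zcst (ppow p (t + 2 * v)))) ->
                   (u <= v)%N).

Definition nu_s (p m : nat) (a : nat -> zps) (d : zps) (t : nat) : nat :=
  (t + 2 * least_rep_u p m a d t)%N.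

(* nu_p(L) = max over SC_p = {1, Delta, p, p Delta} *)
Definition nu_p (p m : nat) (a : nat -> zps) (Delta : zps) : nat :=
  maxn (maxn (nu_s p m a (zcst 1) 0) (nu_s p m a Delta 0))
       (maxn (nu_s p m a (zcst 1) 1) (nu_s p m a Delta 1)).

Definition anisotropic (p m : nat) (a : nat -> zps) : Prop :=
  forall x, zvec p m x -> zeq p (Qdiag m a x) (zcst 0) ->
    forall i, (i < m)%N -> zeq p (x i) (zcst 0).

Definition diag_coef (p : nat) (e : nat -> nat) (eps : nat -> zps) : nat -> zps :=
  fun i => zmul (zcst (ppow p (e i))) (eps i).

(* Suppose [B(x, y)] is not in [p^(nu - 1) Z_p] and let [b < nu - 1] be its
   order.  Then [Q(x)] and [Q(y)] lie in [p^(b + 1) Z_p], and the quadratic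
   [Q(x + w y) = Q(x) + 2 w B(x, y) + w^2 Q(y)] in [w] has a linear coefficient
   of exact order [b] and a quadratic one of higher order, so Newton iteration
   solves [Q(x + w y) = N] for every [N] in [p^b Z_p].  Hence every
   [s p^(2u)] of order [b] or [b + 1] is represented, and [nu <= b + 1 < nu].
   This works for any diagonal lattice over [Z_p] with [p] odd. *)
From mathcomp Require Import all_boot all_order all_algebra.
From mathcomp Require Import ring zify.
From Stdlib Require Import Classical ClassicalEpsilon Wf_nat.
Set Implicit Arguments. Unset Strict Implicit. Unset Printing Implicit Defensive.
Import GRing.Theory.
Local Open Scope ring_scope.

Lemma ppowE p n : ppow p n = p%:Z ^+ n.
Proof. by elim: n => [|n IH] //; rewrite /ppow expnS PoszM exprS -IH. Qed.

Lemma ppow_dvd p j n : (j <= n)%N -> (ppow p j %| ppow p n)%Z.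
Proof. by move=> le_jn; rewrite !ppowE dvdz_exp2l. Qed.

Lemma zin_powP p f m : zin_pow p f m <-> (ppow p m %| f m)%Z.
Proof. by rewrite /zin_pow; split => [/eqP|h]; [|apply/eqP]; rewrite eqz_mod_dvd subr0. Qed.

Lemma zcoh_dvd_sub p f n m : zcoh p f -> (n <= m)%N -> (ppow p n %| f m - f n)%Z.
Proof.
move=> cf /subnKC <-; elim: (m - n)%N => [|j IH]; first by rewrite addn0 subrr dvdz0.
have step : (ppow p (n + j) %| f (n + j).+1 - f (n + j)%N)%Z.
  by rewrite -eqz_mod_dvd; apply/eqP; apply: cf.
have -> : f (n + j.+1)%N - f n = (f (n + j).+1 - f (n + j)%N) + (f (n + j)%N - f n).
  by rewrite addnS; ring.
by rewrite rpredD // (dvdz_trans _ step) // ppow_dvd // leq_addr.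
Qed.

Lemma zin_pow_dvd p f m j n :
  zcoh p f -> zin_pow p f m -> (j <= m)%N -> (j <= n)%N -> (ppow p j %| f n)%Z.
Proof.
move=> cf /zin_powP fm le_jm le_jn.
have -> : f n = (f n - f j) - (f m - f j) + f m by ring.
apply: rpredD; first by apply: rpredB; apply: zcoh_dvd_sub.
by apply: dvdz_trans fm; apply: ppow_dvd.
Qed.

Lemma zcohC p c : zcoh p (zcst c).
Proof. by []. Qed.

Lemma zcohD p f g : zcoh p f -> zcoh p g -> zcoh p (zadd f g).
Proof.
move=> cf cg n; apply/eqP; rewrite eqz_mod_dvd /zadd.
have -> : f n.+1 + g n.+1 - (f n + g n) = (f n.+1 - f n) + (g n.+1 - g n) by ring.
by apply: rpredD; apply: zcoh_dvd_sub.
Qed.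

Lemma zcohM p f g : zcoh p f -> zcoh p g -> zcoh p (zmul f g).
Proof.
move=> cf cg n; apply/eqP; rewrite eqz_mod_dvd /zmul.
have -> : f n.+1 * g n.+1 - f n * g n = f n.+1 * (g n.+1 - g n) + (f n.+1 - f n) * g n.
  by ring.
by apply: rpredD; [apply: dvdz_mull | apply: dvdz_mulr]; apply: zcoh_dvd_sub.
Qed.

Lemma zcoh_Bdiag p m a x y :
  (forall i, (i < m)%N -> zcoh p (a i)) -> zvec p m x -> zvec p m y ->
  zcoh p (Bdiag m a x y).
Proof.
move=> ca cx cy n; apply/eqP; rewrite eqz_mod_dvd /Bdiag -sumrB rpred_sum // => i _.
have := zcohM (zcohM (ca i (ltn_ord i)) (cx i (ltn_ord i))) (cy i (ltn_ord i)) n.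
by rewrite /zmul => /eqP; rewrite eqz_mod_dvd.
Qed.

Lemma zord_eq_of_not_zin_pow p f m :
  ~ zin_pow p f m -> exists2 b, zord_eq p f b & (b < m)%N.
Proof.
move=> not_fm.
have ex : exists n, ~~ (f n == 0 %[mod ppow p n])%Z by exists m; apply/eqP.
case: (ex_minnP ex) => -[|b] fb1 min_b.
  by move: fb1; rewrite /ppow expn0 modz1.
exists b; last by apply: min_b; apply/eqP.
split; last by move/eqP: fb1.
by apply/eqP/negPn/negP => /min_b; rewrite ltnn.
Qed.

(* Newton's correction gains one power of [P]: the linear term cancels the
   residue since [c] inverts [2 u] mod [P], and the quadratic term is negligible
   since [C] lies one power of [P] deeper than [B]. *)
Lemma newton_step (P : int) (j b : nat) (A B C w e u q c : int) :
  A + 2 * w * B + w * w * C = e * P ^+ (j + b) ->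
  B = u * P ^+ b -> C = q * P ^+ b.+1 -> (P %| 1 - c * (2 * u))%Z ->
  (P ^+ (j + b).+1 %| A + 2 * (w - P ^+ j * (e * c)) * B
                        + (w - P ^+ j * (e * c)) * (w - P ^+ j * (e * c)) * C)%Z.
Proof.
move=> res_w eqB eqC inv_c.
have -> : A = e * P ^+ (j + b) - 2 * w * B - w * w * C by rewrite -res_w; ring.
rewrite eqB eqC [X in (_ %| X)%Z](_ : _ = P ^+ (j + b) * e * (1 - c * (2 * u))
   + P ^+ (j + b) * P * (q * e * c * (P ^+ j * (e * c) - 2 * w))).
  have unit_term := dvdz_mul (dvdz_mulr e (dvdzz (P ^+ (j + b)))) inv_c.
  have deep_term := dvdz_mulr (q * e * c * (P ^+ j * (e * c) - 2 * w))
                              (dvdzz (P ^+ (j + b) * P)).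
  by rewrite exprSr rpredD.
by rewrite exprD exprSr; ring.
Qed.

Definition resid (A B C : zps) (n : nat) (w : int) : int :=
  A n + 2 * w * B n + w * w * C n.

Section Hensel.

Variables (p b : nat) (A B C : zps).
Hypotheses (p_prime : prime p) (p_odd : odd p)
  (cA : zcoh p A) (cB : zcoh p B) (cC : zcoh p C)
  (A_b : zin_pow p A b) (B_b : zord_eq p B b) (C_b : zin_pow p C b.+1).

Lemma resid_shift m L w : (m <= L)%N -> (ppow p m %| resid A B C L w - resid A B C m w)%Z.
Proof.
move=> le_mL; rewrite /resid.
have -> : A L + 2 * w * B L + w * w * C L - (A m + 2 * w * B m + w * w * C m)
  = (A L - A m) + 2 * w * (B L - B m) + w * w * (C L - C m) by ring.
by apply: rpredD; [apply: rpredD |]; try apply: dvdz_mull; apply: zcoh_dvd_sub.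
Qed.

Definition unit_part (L : nat) : int := (B L %/ ppow p b)%Z.

Definition half_inv (L : nat) : int := (egcdz (2 * unit_part L) p).1.

Lemma unit_partE L : (b <= L)%N -> B L = unit_part L * ppow p b.
Proof. by move=> le_bL; rewrite divzK // (zin_pow_dvd cB B_b.1). Qed.

Lemma half_invP L : (b < L)%N -> (p %| 1 - half_inv L * (2 * unit_part L))%Z.
Proof.
move=> lt_bL.
have p_ndvd_u : ~~ (p %| unit_part L)%Z.
  apply/negP => /dvdzP[v uE]; apply: B_b.2; apply/zin_powP.
  have -> : B b.+1 = B L - (B L - B b.+1) by ring.
  apply: rpredB; last exact: zcoh_dvd_sub.
  by rewrite (unit_partE (ltnW lt_bL)) uE -mulrA !ppowE exprS dvdz_mull.
have cop : coprimez (2 * unit_part L) p.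
  rewrite coprimezMl; apply/andP; split.
    by rewrite coprimezE coprime2n.
  by rewrite coprimezE coprime_sym prime_coprime // -dvdzE.
rewrite /half_inv; case: egcdzP => c v bezout _.
rewrite (eqP cop) in bezout.
by apply/dvdzP; exists v; rewrite [(_, _).1]/= -[X in X - _]bezout; ring.
Qed.


Fixpoint newton (j : nat) : int :=
  if j is j'.+1 then
    let w := newton j' in let L := (j' + b).+1 in
    w - ppow p j' * ((resid A B C L w %/ ppow p (j' + b))%Z * half_inv L)
  else 0.

Lemma newton_resid j : (ppow p (j + b) %| resid A B C (j + b) (newton j))%Z.
Proof.
elim: j => [|j IH].
  by rewrite add0n /resid !(mulr0, mul0r) !addr0; apply/zin_powP.
set L := (j + b).+1; rewrite addSn -/L /=.
have res_L : (ppow p (j + b) %| resid A B C L (newton j))%Z.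
  have -> : resid A B C L (newton j) = (resid A B C L (newton j)
            - resid A B C (j + b) (newton j)) + resid A B C (j + b) (newton j) by ring.
  by rewrite rpredD // resid_shift.
have lt_bL : (b < L)%N by rewrite ltnS leq_addl.
have C_L : (ppow p b.+1 %| C L)%Z by apply: zin_pow_dvd C_b _ _.
move: res_L C_L; rewrite !ppowE => res_L C_L.
apply: (newton_step (A := A L) (B := B L) (C := C L)).
- by rewrite divzK.
- by rewrite -ppowE unit_partE // ltnW.
- exact/esym/divzK.
- exact: half_invP.
Qed.

Lemma zcoh_newton : zcoh p newton.
Proof.
move=> j; apply/eqP; rewrite eqz_mod_dvd /= addrAC subrr add0r rpredN.
exact: dvdz_mulr (dvdzz _).
Qed.

Lemma hensel_quadratic :
  exists2 w, zcoh p w & zeq p (fun n => resid A B C n (w n)) (zcst 0).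
Proof.
exists newton => [|n]; first exact: zcoh_newton.
apply/eqP; rewrite eqz_mod_dvd subr0.
have -> : resid A B C n (newton n) = resid A B C (n + b) (newton n)
          - (resid A B C (n + b) (newton n) - resid A B C n (newton n)) by ring.
apply: rpredB; last by apply: resid_shift; rewrite leq_addr.
by apply: dvdz_trans (newton_resid n); apply: ppow_dvd; rewrite leq_addr.
Qed.

End Hensel.

Lemma zcohB p f g : zcoh p f -> zcoh p g -> zcoh p (fun n => f n - g n).
Proof.
move=> cf cg n; apply/eqP; rewrite eqz_mod_dvd.
have -> : f n.+1 - g n.+1 - (f n - g n) = (f n.+1 - f n) - (g n.+1 - g n) by ring.
by apply: rpredB; apply: zcoh_dvd_sub.
Qed.

Lemma zin_pow_le p f m j : zcoh p f -> zin_pow p f m -> (j <= m)%N -> zin_pow p f j.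
Proof. by move=> cf fm le_jm; apply/zin_powP; apply: zin_pow_dvd fm _ _. Qed.

Lemma Qdiag_add_scale m a x y (w : zps) n :
  Qdiag m a (fun i => zadd (x i) (zmul w (y i))) n
  = resid (Qdiag m a x) (Bdiag m a x y) (Qdiag m a y) n (w n).
Proof.
rewrite /resid /Qdiag /Bdiag /zadd /zmul !mulr_sumr -!big_split /=.
by apply: eq_bigr => i _; ring.
Qed.

Lemma represents_of_zord_Bdiag p m a x y b N :
  prime p -> odd p -> (forall i, (i < m)%N -> zcoh p (a i)) ->
  zvec p m x -> zvec p m y -> zord_eq p (Bdiag m a x y) b ->
  zin_pow p (Qdiag m a x) b -> zin_pow p (Qdiag m a y) b.+1 ->
  zcoh p N -> zin_pow p N b -> represents p m a N.
Proof.
move=> p_prime p_odd ca cx cy Bb Qxb Qyb cN Nb.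
have cBxy := zcoh_Bdiag ca cx cy.
have cQx := zcoh_Bdiag ca cx cx.
have cQy := zcoh_Bdiag ca cy cy.
have cA := zcohB cQx cN.
have Ab : zin_pow p (fun n => Qdiag m a x n - N n) b.
  by apply/zin_powP; apply: rpredB; apply/zin_powP.
have [w cw res0] := hensel_quadratic p_prime p_odd cA cBxy cQy Ab Bb Qyb.
exists (fun i => zadd (x i) (zmul w (y i))); split.
  by move=> i lt_im; apply: zcohD (cx i lt_im) (zcohM cw (cy i lt_im)).
move=> n; apply/eqP; rewrite eqz_mod_dvd Qdiag_add_scale.
have -> : resid (Qdiag m a x) (Bdiag m a x y) (Qdiag m a y) n (w n) - N n
  = resid (fun n => Qdiag m a x n - N n) (Bdiag m a x y) (Qdiag m a y) n (w n).
  by rewrite /resid; ring.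
by move/eqP: (res0 n); rewrite eqz_mod_dvd subr0.
Qed.

Lemma exists_double_between b t : (t <= 1)%N -> exists u, (b <= t + 2 * u <= b.+1)%N.
Proof.
move=> le_t1; exists (b.+1 - t)./2.
have := odd_double_half (b.+1 - t); rewrite -muln2.
by case: odd => /= h; apply/andP; split; lia.
Qed.

Lemma nu_s_le_of_represents p m a d t u :
  represents p m a (zmul d (zcst (ppow p (t + 2 * u)))) -> (nu_s p m a d t <= t + 2 * u)%N.
Proof.
set P := fun v => represents p m a (zmul d (zcst (ppow p (t + 2 * v)))) => Pu.
have [u0 [[Pu0 min_u0] _]] :=
  @dec_inh_nat_subset_has_unique_least_element P (fun n => classic (P n)) (ex_intro P u Pu).
have [_ min_eps] := epsilon_spec (inhabits 0%N) (fun v => P v /\ forall v', P v' -> (v <= v')%N)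
  (ex_intro _ u0 (conj Pu0 (fun v' Pv' => introT ssrnat.leP (min_u0 v' Pv')))).
by rewrite leq_add2l leq_mul2l min_eps ?orbT.
Qed.

Lemma nu_p_le_of_zord_Bdiag p m a Delta x y b :
  prime p -> odd p -> (forall i, (i < m)%N -> zcoh p (a i)) -> zcoh p Delta ->
  zvec p m x -> zvec p m y -> zord_eq p (Bdiag m a x y) b ->
  zin_pow p (Qdiag m a x) b -> zin_pow p (Qdiag m a y) b.+1 ->
  (nu_p p m a Delta <= b.+1)%N.
Proof.
move=> p_prime p_odd ca cD cx cy Bb Qxb Qyb.
suff nu_s_le d t : zcoh p d -> (t <= 1)%N -> (nu_s p m a d t <= b.+1)%N.
  by rewrite /nu_p !geq_max !nu_s_le.
move=> cd le_t1; have [u /andP[le_b le_b1]] := exists_double_between b le_t1.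
apply: leq_trans le_b1; apply: nu_s_le_of_represents.
apply: represents_of_zord_Bdiag Bb Qxb Qyb _ _ => //; first exact: zcohM cd (zcohC _ _).
by apply/zin_powP; rewrite /zmul /zcst dvdz_mull // ppow_dvd.
Qed.

Lemma zin_pow_Bdiag_nu_pred p m a Delta x y :
  prime p -> odd p -> (forall i, (i < m)%N -> zcoh p (a i)) -> zcoh p Delta ->
  zvec p m x -> zvec p m y ->
  zin_pow p (Qdiag m a x) (nu_p p m a Delta) -> zin_pow p (Qdiag m a y) (nu_p p m a Delta) ->
  zin_pow p (Bdiag m a x y) (nu_p p m a Delta).-1.
Proof.
move=> p_prime p_odd ca cD cx cy Qx_nu Qy_nu.
apply/eqP/negPn/negP => /eqP /zord_eq_of_not_zin_pow[b Bb lt_b_nu].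
have lt_b1_nu : (b.+1 < nu_p p m a Delta)%N by lia.
have Qxb := zin_pow_le (zcoh_Bdiag ca cx cx) Qx_nu (ltnW (ltnW lt_b1_nu)).
have Qyb := zin_pow_le (zcoh_Bdiag ca cy cy) Qy_nu (ltnW lt_b1_nu).
have := nu_p_le_of_zord_Bdiag p_prime p_odd ca cD cx cy Bb Qxb Qyb.
by rewrite leqNgt lt_b1_nu.
Qed.

Theorem lemma2p8 (p k : nat) (e : nat -> nat) (eps : nat -> zps) (Delta : zps) :
  prime p -> odd p -> (4 <= k)%N ->
  (forall i, (i < k)%N -> zcoh p (eps i) /\ zunit p (eps i)) ->
  e 0%N = 0%N ->
  (forall i j, (i <= j < k)%N -> (e i <= e j)%N) ->
  zcoh p Delta -> zunit p Delta -> ~ zsquare p Delta ->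
  anisotropic p 3 (diag_coef p e eps) ->
  forall x y : nat -> zps, zvec p k x -> zvec p k y ->
    zord_eq p (Qdiag k (diag_coef p e eps) x) (nu_p p k (diag_coef p e eps) Delta) ->
    zord_eq p (Qdiag k (diag_coef p e eps) y) (nu_p p k (diag_coef p e eps) Delta) ->
    zin_pow p (Bdiag k (diag_coef p e eps) x y) (nu_p p k (diag_coef p e eps) Delta).-1.
Proof.
move=> p_prime p_odd _ eps_unit _ _ cD _ _ _ x y cx cy [Qx_nu _] [Qy_nu _].
apply: zin_pow_Bdiag_nu_pred => // i lt_ik.
exact: zcohM (zcohC _ _) (eps_unit i lt_ik).1.
Qed.
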